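(* Let $L:\mathcal{B}\to\mathcal{A}$ be left adjoint to $R:\mathcal{A}\to\mathcal{B}$ with unit $\eta$ and counit $\epsilon$, and let $R_1:\mathcal{A}\to\mathcal{B}_1$ be the comparison functor. 1) If $R$ is separable, then $R_1$ is full and faithful. 2) Suppose $R_1$ has a left adjoint $L_1$. If $(L,\epsilon L)$ is relatively projective as a right module functor on $(RL,R\epsilon L,\eta)$, then $L_1$ is full and faithful. 3) Suppose $R_1$ has a left adjoint $L_1$. If $R$ is separable, then $R$ is monadic.
   Context: $\mathcal{B}_1$ is the Eilenberg–Moore category of the monad $(RL,R\epsilon L,\eta)$ and $R_1Y=(RY,R\epsilon Y)$, $R_1f=Rf$. $R$ is monadic if $R_1$ is an equivalence. For a right adjoint $R$, $R$ is separable iff there is a natural transformation $\sigma:\mathrm{Id}_{\mathcal{A}}\to LR$ with $\epsilon\circ\sigma=\mathrm{Id}$. Given a monad $(Q,m,u)$ on $\mathcal{B}$, a right module functor is a pair $(W,\mu)$ with $W:\mathcal{B}\to\mathcal{A}$ and $\mu:WQ\to W$ natural, $\mu\circ\mu Q=\mu\circ Wm$, $\mu\circ Wu=\mathrm{Id}_W$; it is relatively projective if there is a natural $\gamma:W\to WQ$ with $\mu\circ\gamma=\mathrm{Id}_W$ and $Wm\circ\gamma Q=\gamma\circ\mu$. $(L,\epsilon L)$ is a right module functor on $(RL,R\epsilon L,\eta)$. *)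

From Stdlib Require Import ProofIrrelevance.

Set Implicit Arguments.

Record Category := {
  Ob :> Type;
  Hom : Ob -> Ob -> Type;
  idm : forall a, Hom a a;
  comp : forall x y z, Hom y z -> Hom x y -> Hom x z;
  comp_id_l : forall a b (f : Hom a b), comp (idm b) f = f;
  comp_id_r : forall a b (f : Hom a b), comp f (idm a) = f;
  comp_assoc : forall a b c d (f : Hom c d) (g : Hom b c) (h : Hom a b),
      comp f (comp g h) = comp (comp f g) h
}.
Arguments Hom {c} _ _ : rename.
Arguments idm {c} a : rename.
Arguments comp {c x y z} _ _ : rename.
Notation "g ∘ f" := (comp g f) (at level 40, left associativity).

Record Functor (C D : Category) := {
  fobj :> C -> D;
  fmap : forall a b, @Hom C a b -> @Hom D (fobj a) (fobj b);
  fmap_id : forall a, fmap a a (idm a) = idm (fobj a);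
  fmap_comp : forall a b c (g : @Hom C b c) (f : @Hom C a b),
      fmap a c (g ∘ f) = fmap b c g ∘ fmap a b f
}.
Arguments fmap {C D} F {a b} _ : rename.

Definition Fcomp (C D E : Category) (G : Functor D E) (F : Functor C D)
  : Functor C E.
Proof.
  refine {| fobj := fun X => G (F X);
            fmap := fun a b f => fmap G (fmap F f) |}.
  - intros a. rewrite !fmap_id. reflexivity.
  - intros a b c g f. rewrite !fmap_comp. reflexivity.
Defined.

Record is_adjunction (A B : Category) (L : Functor B A) (R : Functor A B)
    (eta : forall Y : B, @Hom B Y (R (L Y)))
    (eps : forall X : A, @Hom A (L (R X)) X) : Prop := {
  eta_nat : forall Y Y' (f : @Hom B Y Y'),
      fmap R (fmap L f) ∘ eta Y = eta Y' ∘ f;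
  eps_nat : forall X X' (g : @Hom A X X'),
      g ∘ eps X = eps X' ∘ fmap L (fmap R g);
  tri_L : forall Y, eps (L Y) ∘ fmap L (eta Y) = idm (L Y);
  tri_R : forall X, fmap R (eps X) ∘ eta (R X) = idm (R X)
}.

Definition fully_faithful (C D : Category) (F : Functor C D) : Prop :=
  forall a b : C,
    (forall f g : @Hom C a b, fmap F f = fmap F g -> f = g) /\
    (forall h : @Hom D (F a) (F b), exists f, fmap F f = h).

Definition is_equivalence (C D : Category) (F : Functor C D) : Prop :=
  exists (G : Functor D C)
         (al : forall X : C, @Hom C (G (F X)) X)
         (al' : forall X : C, @Hom C X (G (F X)))
         (be : forall Y : D, @Hom D (F (G Y)) Y)
         (be' : forall Y : D, @Hom D Y (F (G Y))),
    (forall X X' (f : @Hom C X X'), f ∘ al X = al X' ∘ fmap G (fmap F f)) /\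
    (forall X, al X ∘ al' X = idm X /\ al' X ∘ al X = idm (G (F X))) /\
    (forall Y Y' (g : @Hom D Y Y'), g ∘ be Y = be Y' ∘ fmap F (fmap G g)) /\
    (forall Y, be Y ∘ be' Y = idm Y /\ be' Y ∘ be Y = idm (F (G Y))).

Definition separable (A B : Category) (L : Functor B A) (R : Functor A B)
    (eps : forall X : A, @Hom A (L (R X)) X) : Prop :=
  exists sigma : forall X : A, @Hom A X (L (R X)),
    (forall X X' (g : @Hom A X X'), fmap L (fmap R g) ∘ sigma X = sigma X' ∘ g) /\
    (forall X, eps X ∘ sigma X = idm X).

Definition relatively_projective (A B : Category) (Q : Functor B B)
    (m : forall Y : B, @Hom B (Q (Q Y)) (Q Y))
    (W : Functor B A) (mu : forall Y : B, @Hom A (W (Q Y)) (W Y)) : Prop :=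
  exists gamma : forall Y : B, @Hom A (W Y) (W (Q Y)),
    (forall Y Y' (f : @Hom B Y Y'),
        fmap W (fmap Q f) ∘ gamma Y = gamma Y' ∘ fmap W f) /\
    (forall Y, mu Y ∘ gamma Y = idm (W Y)) /\
    (forall Y, fmap W (m Y) ∘ gamma (Q Y) = gamma Y ∘ mu Y).

Section EM.
Variables (A B : Category) (L : Functor B A) (R : Functor A B)
  (eta : forall Y : B, @Hom B Y (R (L Y)))
  (eps : forall X : A, @Hom A (L (R X)) X).

Record EMAlg := {
  carrier : B;
  act : @Hom B (R (L carrier)) carrier;
  act_unit : act ∘ eta carrier = idm carrier;
  act_assoc : act ∘ fmap R (eps (L carrier)) = act ∘ fmap R (fmap L act)
}.

Definition EMHom (X Y : EMAlg) : Type :=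
  { f : @Hom B (carrier X) (carrier Y) |
    f ∘ act X = act Y ∘ fmap R (fmap L f) }.

Lemma EMHom_eq (X Y : EMAlg) (f g : EMHom X Y) :
  proj1_sig f = proj1_sig g -> f = g.
Proof.
  destruct f as [f p], g as [g q]; simpl; intros ->.
  f_equal; apply proof_irrelevance.
Qed.

Definition EMid (X : EMAlg) : EMHom X X.
Proof.
  exists (idm (carrier X)).
  rewrite comp_id_l, !fmap_id, comp_id_r. reflexivity.
Defined.

Definition EMcomp (X Y Z : EMAlg) (g : EMHom Y Z) (f : EMHom X Y) : EMHom X Z.
Proof.
  exists (proj1_sig g ∘ proj1_sig f).
  destruct g as [g pg], f as [f pf]; simpl.
  rewrite <- comp_assoc, pf, comp_assoc, pg, <- comp_assoc,
    <- (fmap_comp R), <- (fmap_comp L). reflexivity.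
Defined.

Definition EMCat : Category.
Proof.
  refine {| Ob := EMAlg; Hom := EMHom; idm := EMid; comp := EMcomp |}.
  - intros; apply EMHom_eq; simpl; apply comp_id_l.
  - intros; apply EMHom_eq; simpl; apply comp_id_r.
  - intros; apply EMHom_eq; simpl; apply comp_assoc.
Defined.

Hypothesis adj : is_adjunction L R eta eps.

Definition R1_obj (X : A) : EMAlg.
Proof.
  refine {| carrier := R X; act := fmap R (eps X) |}.
  - apply (tri_R adj).
  - rewrite <- !fmap_comp. f_equal. apply (eps_nat adj).
Defined.

Definition R1_map (X X' : A) (g : @Hom A X X') : EMHom (R1_obj X) (R1_obj X').
Proof.
  exists (fmap R g). simpl. rewrite <- !fmap_comp. f_equal. apply (eps_nat adj).
Defined.

Definition R1 : Functor A EMCat.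
Proof.
  refine (@Build_Functor A EMCat R1_obj R1_map _ _).
  - intros; apply EMHom_eq; simpl; apply fmap_id.
  - intros; apply EMHom_eq; simpl; apply fmap_comp.
Defined.

End EM.

Definition monadic (A B : Category) (L : Functor B A) (R : Functor A B)
    (eta : forall Y : B, @Hom B Y (R (L Y)))
    (eps : forall X : A, @Hom A (L (R X)) X)
    (adj : is_adjunction L R eta eps) : Prop :=
  is_equivalence (R1 adj).

(* The proof rests on a few facts valid for an arbitrary adjunction F ⊣ G:
   the counit is invertible when G is fully faithful; F is fully faithful
   when the unit is invertible; if G k = eta_(G Z) then eta_(G Z) is
   invertible, and invertibility of the unit passes to retracts of objects
   G Z; an adjunction with invertible unit and counit is an equivalence.

   For the comparison functor we show: every algebra map R1 (L Y) -> R1 X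
   comes from A (so the unit of L1 ⊣ R1 at R1 (L Y) lifts along R1); a
   separability splitting sigma makes R1 fully faithful (part 1); a relative
   projectivity splitting gamma exhibits every algebra as a retract of the
   free algebra R1 (L Y), whence the unit of L1 ⊣ R1 is invertible and L1 is
   fully faithful (part 2); separability of R yields such a gamma, so both
   unit and counit of L1 ⊣ R1 are invertible and R is monadic (part 3). *)

From Stdlib Require Import ClassicalEpsilon.

(* The category and functor laws with the ambient structures implicit, so
   that they can be used directly as rewrite rules. *)
Lemma assoc {C : Category} {a b c d : C} (f : Hom c d) (g : Hom b c) (h : Hom a b) :
  f ∘ (g ∘ h) = f ∘ g ∘ h.
Proof. apply comp_assoc. Qed.

Lemma id_left {C : Category} {a b : C} (f : Hom a b) : idm b ∘ f = f.
Proof. apply comp_id_l. Qed.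

Lemma id_right {C : Category} {a b : C} (f : Hom a b) : f ∘ idm a = f.
Proof. apply comp_id_r. Qed.

Lemma map_comp {C D : Category} (F : Functor C D) {a b c : C}
  (g : Hom b c) (f : Hom a b) : fmap F (g ∘ f) = fmap F g ∘ fmap F f.
Proof. apply fmap_comp. Qed.

Lemma map_id {C D : Category} (F : Functor C D) (a : C) : fmap F (idm a) = idm (F a).
Proof. apply fmap_id. Qed.

Definition is_inverse {C : Category} {a b : C} (f : Hom a b) (g : Hom b a) : Prop :=
  g ∘ f = idm a /\ f ∘ g = idm b.

Lemma choose_inverses {C : Category} {I : Type} (s t : I -> C)
  (f : forall i, Hom (s i) (t i)) :
  (forall i, exists g, is_inverse (f i) g) ->
  exists g : forall i, Hom (t i) (s i), forall i, is_inverse (f i) (g i).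
Proof.
  intros Hf.
  exists (fun i => proj1_sig (constructive_indefinite_description _ (Hf i))).
  intros i. exact (proj2_sig (constructive_indefinite_description _ (Hf i))).
Qed.

Section Adjunction.

Context {C D : Category} {F : Functor D C} {G : Functor C D}
  {eta : forall Y : D, Hom Y (G (F Y))} {eps : forall X : C, Hom (F (G X)) X}
  (adj : is_adjunction F G eta eps).

Lemma transpose_adjunct {W : D} {Z : C} (phi : Hom (F W) Z) :
  phi = eps Z ∘ fmap F (fmap G phi ∘ eta W).
Proof.
  rewrite map_comp, assoc, <- (eps_nat adj), <- assoc, (tri_L adj), id_right.
  reflexivity.
Qed.

Lemma unit_lift_splits_counit {Z : C} {k : Hom Z (F (G Z))} :
  fmap G k = eta (G Z) -> k ∘ eps Z = idm (F (G Z)).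
Proof.
  intros Hk.
  rewrite (transpose_adjunct (k ∘ eps Z)), (map_comp G k),
    <- (assoc _ (fmap G (eps Z))), (tri_R adj), id_right, Hk, (tri_L adj).
  reflexivity.
Qed.

Lemma counit_iso_of_fully_faithful :
  fully_faithful G -> forall X, exists e, is_inverse (eps X) e.
Proof.
  intros HG X.
  destruct (proj2 (HG X (F (G X))) (eta (G X))) as [e He].
  exists e. split.
  - exact (unit_lift_splits_counit He).
  - apply (proj1 (HG X X)). rewrite map_comp, He, (tri_R adj), map_id.
    reflexivity.
Qed.

Lemma unit_iso_at_image {Z : C} {k : Hom Z (F (G Z))} :
  fmap G k = eta (G Z) -> is_inverse (eta (G Z)) (fmap G (eps Z)).
Proof.
  intros Hk. split.
  - apply (tri_R adj).
  - rewrite <- Hk, <- map_comp, (unit_lift_splits_counit Hk). apply map_id.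
Qed.

Lemma unit_iso_of_retract {Y : D} {Z : C} (i : Hom Y (G Z)) {p : Hom (G Z) Y}
  {j : Hom (G (F (G Z))) (G Z)} :
  p ∘ i = idm Y -> is_inverse (eta (G Z)) j ->
  exists r, is_inverse (eta Y) r.
Proof.
  intros Hpi [Hj1 Hj2].
  exists (p ∘ j ∘ fmap G (fmap F i)). split.
  - rewrite <- !assoc, (eta_nat adj), (assoc j), Hj1, id_left, Hpi. reflexivity.
  - rewrite !assoc, <- (eta_nat adj), <- (assoc _ (eta _)), Hj2, id_right,
      <- !map_comp, Hpi, !map_id. reflexivity.
Qed.

Lemma fully_faithful_of_unit_iso :
  (forall Y, exists u, is_inverse (eta Y) u) -> fully_faithful F.
Proof.
  intros Hu a b.
  destruct (Hu b) as [ub [Hub1 Hub2]].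
  assert (Hrecover : forall f : Hom a b, f = ub ∘ (fmap G (fmap F f) ∘ eta a)).
  { intros f. rewrite (eta_nat adj), assoc, Hub1, id_left. reflexivity. }
  split.
  - intros f g Hfg. rewrite (Hrecover f), (Hrecover g), Hfg. reflexivity.
  - intros h. exists (ub ∘ (fmap G h ∘ eta a)).
    rewrite (transpose_adjunct (fmap F _)), (eta_nat adj), assoc, Hub2, id_left.
    symmetry. apply transpose_adjunct.
Qed.

Lemma unit_inverse_natural {u : forall Y, Hom (G (F Y)) Y} :
  (forall Y, is_inverse (eta Y) (u Y)) ->
  forall Y Y' (g : Hom Y Y'), g ∘ u Y = u Y' ∘ fmap G (fmap F g).
Proof.
  intros Hu Y Y' g.
  destruct (Hu Y) as [_ HY]. destruct (Hu Y') as [HY' _].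
  rewrite <- (id_left g) at 1.
  rewrite <- HY', <- (assoc (u Y') (eta Y') g), <- (eta_nat adj), assoc,
    <- (assoc _ (eta Y)), HY, id_right.
  reflexivity.
Qed.

Lemma equivalence_of_unit_counit_iso :
  (forall Y, exists u, is_inverse (eta Y) u) ->
  (forall X, exists e, is_inverse (eps X) e) ->
  is_equivalence G.
Proof.
  intros Hu He.
  destruct (choose_inverses _ _ eta Hu) as [u Hu'].
  destruct (choose_inverses _ _ eps He) as [e He'].
  exists F, eps, e, u, eta. split; [|split; [|split]].
  - apply (eps_nat adj).
  - intros X. destruct (He' X). split; assumption.
  - apply (unit_inverse_natural Hu').
  - intros Y. destruct (Hu' Y). split; assumption.
Qed.

End Adjunction.

Section Comparison.

Context {A B : Category} {L : Functor B A} {R : Functor A B}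
  {eta : forall Y : B, Hom Y (R (L Y))} {eps : forall X : A, Hom (L (R X)) X}
  (adj : is_adjunction L R eta eps).

Local Notation B1 := (EMCat L R eta eps).

(* Every algebra map out of a free algebra [R1 (L Y)] is in the image of
   [R1]: it is [R1] of the transpose of its restriction along [eta Y]. *)
Lemma comparison_full_on_free {Y : B} {X : A}
  (h : @Hom B1 (R1 adj (L Y)) (R1 adj X)) :
  exists k : Hom (L Y) X, fmap (R1 adj) k = h.
Proof.
  destruct h as [e He]. simpl in e, He.
  exists (eps X ∘ fmap L (e ∘ eta Y)).
  apply EMHom_eq. simpl.
  rewrite (map_comp R), (map_comp L), (map_comp R (fmap L e)), assoc, <- He.
  rewrite <- assoc, <- map_comp, (tri_L adj), map_id, id_right.
  reflexivity.
Qed.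

(* Part 1: a separability splitting [sigma] of the counit makes the
   comparison functor fully faithful; [sigma] recovers [g] from [R g] via
   [g = eps ∘ L (R g) ∘ sigma]. *)
Lemma comparison_fully_faithful_of_separable :
  separable L R eps -> fully_faithful (R1 adj).
Proof.
  intros [sigma [_ Hsigma_split]] a b. split.
  - intros f g Hfg. apply (f_equal (@proj1_sig _ _)) in Hfg. simpl in Hfg.
    rewrite <- (id_right f), <- (id_right g), <- (Hsigma_split a), !assoc,
      !(eps_nat adj), Hfg.
    reflexivity.
  - intros [h Hh]. simpl in Hh.
    exists (eps b ∘ fmap L h ∘ sigma a).
    apply EMHom_eq. simpl.
    rewrite !(map_comp R), <- Hh, <- (assoc h), <- (map_comp R (eps a)),
      Hsigma_split, map_id, id_right.
    reflexivity.
Qed.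

Lemma relatively_projective_of_separable :
  separable L R eps ->
  relatively_projective (Fcomp R L) (fun Y => fmap R (eps (L Y)))
                        L (fun Y => eps (L Y)).
Proof.
  intros [sigma [Hsigma_nat Hsigma_split]].
  exists (fun Y => sigma (L Y)). simpl. split; [|split].
  - intros Y Y' f. apply Hsigma_nat.
  - intros Y. apply Hsigma_split.
  - intros Y. apply Hsigma_nat.
Qed.

Section RetractOfFree.

Variable gamma : forall Y : B, Hom (L Y) (L (R (L Y))).
Hypothesis gamma_nat : forall Y Y' (f : Hom Y Y'),
  fmap L (fmap R (fmap L f)) ∘ gamma Y = gamma Y' ∘ fmap L f.
Hypothesis gamma_split : forall Y, eps (L Y) ∘ gamma Y = idm (L Y).
Hypothesis gamma_mult : forall Y,
  fmap L (fmap R (eps (L Y))) ∘ gamma (R (L Y)) = gamma Y ∘ eps (L Y).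

Definition split_action (Y : EMAlg L R eta eps) : Hom (L (carrier Y)) (L (carrier Y)) :=
  fmap L (act Y) ∘ gamma (carrier Y).

(* [split_action] coequalizes [L a] and [eps (L y)]; this is what makes its
   adjunct an algebra map (associativity of [a] plus [gamma_mult]). *)
Lemma split_action_coequalizes (Y : EMAlg L R eta eps) :
  split_action Y ∘ fmap L (act Y) = split_action Y ∘ eps (L (carrier Y)).
Proof.
  unfold split_action.
  rewrite <- assoc, <- (gamma_nat _ _ (act Y)), assoc, <- (map_comp L (act Y)),
    <- act_assoc, (map_comp L), <- assoc, gamma_mult, assoc.
  reflexivity.
Qed.

(* The candidate section [y -> R L y] of the action, adjunct of [split_action]. *)
Definition action_section (Y : EMAlg L R eta eps) : Hom (carrier Y) (R (L (carrier Y))) :=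
  fmap R (split_action Y) ∘ eta (carrier Y).

Lemma action_section_morphism (Y : EMAlg L R eta eps) :
  action_section Y ∘ act Y =
  fmap R (eps (L (carrier Y))) ∘ fmap R (fmap L (action_section Y)).
Proof.
  unfold action_section.
  rewrite (map_comp L), (map_comp R (fmap L (fmap R _))), assoc,
    <- (map_comp R (eps _)), <- (eps_nat adj), (map_comp R (split_action Y)),
    <- (assoc (fmap R (split_action Y)) (fmap R (eps _))), <- (map_comp R (eps _)),
    (tri_L adj), map_id, id_right.
  rewrite <- assoc, <- (eta_nat adj), assoc, <- map_comp, split_action_coequalizes,
    map_comp, <- assoc, (tri_R adj), id_right.
  reflexivity.
Qed.

Lemma action_section_retraction (Y : EMAlg L R eta eps) :
  act Y ∘ action_section Y = idm (carrier Y).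
Proof.
  unfold action_section, split_action.
  rewrite (map_comp R (fmap L _)), !assoc, <- act_assoc, <- (assoc (act Y)),
    <- map_comp, gamma_split, map_id, id_right, act_unit.
  reflexivity.
Qed.

Lemma algebra_retract_of_free (Y : B1) :
  exists (i : @Hom B1 Y (R1 adj (L (carrier Y))))
         (p : @Hom B1 (R1 adj (L (carrier Y))) Y), p ∘ i = idm Y.
Proof.
  exists (exist _ (action_section Y) (action_section_morphism Y)).
  exists (exist _ (act Y) (act_assoc Y)).
  apply EMHom_eq. apply action_section_retraction.
Qed.

End RetractOfFree.

(* Part 2, core: if (L, eps L) is relatively projective, the unit of any
   adjunction [L1 ⊣ R1] is invertible: it is so at free algebras, and every
   algebra is a retract of a free one. *)
Lemma comparison_unit_iso_of_relatively_projective
  {L1 : Functor B1 A} {eta1 : forall Y : B1, Hom Y (R1 adj (L1 Y))}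
  {eps1 : forall X : A, Hom (L1 (R1 adj X)) X} :
  is_adjunction L1 (R1 adj) eta1 eps1 ->
  relatively_projective (Fcomp R L) (fun Y => fmap R (eps (L Y)))
                        L (fun Y => eps (L Y)) ->
  forall Y, exists u, is_inverse (eta1 Y) u.
Proof.
  intros adj1 [gamma [Hnat [Hsplit Hmult]]] Y. simpl in Hnat, Hmult.
  destruct (algebra_retract_of_free gamma Hnat Hsplit Hmult Y) as [i [p Hpi]].
  destruct (comparison_full_on_free (eta1 (R1 adj (L (carrier Y))))) as [k Hk].
  exact (unit_iso_of_retract adj1 i Hpi (unit_iso_at_image adj1 Hk)).
Qed.

End Comparison.

Theorem proposition1p16 (A B : Category) (L : Functor B A) (R : Functor A B)
    (eta : forall Y : B, @Hom B Y (R (L Y)))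
    (eps : forall X : A, @Hom A (L (R X)) X)
    (adj : is_adjunction L R eta eps) :
  (* 1) *)
  (separable L R eps -> fully_faithful (R1 adj)) /\
  (* 2) *)
  (forall (L1 : Functor (EMCat L R eta eps) A)
          (eta1 : forall Y : EMCat L R eta eps, @Hom (EMCat L R eta eps) Y (R1 adj (L1 Y)))
          (eps1 : forall X : A, @Hom A (L1 (R1 adj X)) X),
      is_adjunction L1 (R1 adj) eta1 eps1 ->
      relatively_projective (Fcomp R L) (fun Y => fmap R (eps (L Y)))
                            L (fun Y => eps (L Y)) ->
      fully_faithful L1) /\
  (* 3) *)
  (forall (L1 : Functor (EMCat L R eta eps) A)
          (eta1 : forall Y : EMCat L R eta eps, @Hom (EMCat L R eta eps) Y (R1 adj (L1 Y)))
          (eps1 : forall X : A, @Hom A (L1 (R1 adj X)) X),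
      is_adjunction L1 (R1 adj) eta1 eps1 ->
      separable L R eps -> monadic adj).
Proof.
  split; [|split].
  - exact (comparison_fully_faithful_of_separable adj).
  - intros L1 eta1 eps1 adj1 Hproj.
    apply (fully_faithful_of_unit_iso adj1).
    exact (comparison_unit_iso_of_relatively_projective adj adj1 Hproj).
  - intros L1 eta1 eps1 adj1 Hsep.
    apply (equivalence_of_unit_counit_iso adj1).
    + exact (comparison_unit_iso_of_relatively_projective adj adj1
               (relatively_projective_of_separable Hsep)).
    + exact (counit_iso_of_fully_faithful adj1
               (comparison_fully_faithful_of_separable adj Hsep)).
Qed.
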